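(* Let $\alpha_1,\alpha_2$ be positive integers with $\alpha_2\ge2$ and $n=\alpha_1+\alpha_2$. The Laplacian spectrum of $C(\alpha_1,\alpha_2)$ is $\{n^{(\alpha_1)},\ \alpha_1^{(\alpha_2-1)},\ 0^{(1)}\}$ (superscripts are multiplicities), so it has exactly three distinct Laplacian eigenvalues. Moreover, a $\mathcal{C}$-graph $C(\alpha_1,\dots,\alpha_k)$ ($k$ even) has exactly three distinct Laplacian eigenvalues if and only if $k=2$ and $\alpha_2\ge2$.
   Context: $C(\alpha_1,\dots,\alpha_k)$ is defined recursively by $C(\alpha_1)=\overline{K_{\alpha_1}}$ (edgeless graph) and $C(\alpha_1,\dots,\alpha_i)=\overline{C(\alpha_1,\dots,\alpha_{i-1})\cup K_{\alpha_i}}$ for $i=2,\dots,k$ (disjoint union, then complement); with $k$ even it is called a $\mathcal{C}$-graph. In particular $C(\alpha_1,\alpha_2)$ is the complete split graph $K_{\alpha_1}\vee\overline{K_{\alpha_2}}$. Laplacian eigenvalues are those of $L=D-A$. *)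

From mathcomp Require Import all_boot all_order all_algebra all_field.
Unset Printing Implicit Defensive.
Import Order.TTheory GRing.Theory Num.Theory.
Local Open Scope ring_scope.

(* Adjacency of C(alpha_1,...,alpha_i), given the REVERSED parameter list
   r = [:: alpha_i; ...; alpha_1].  Vertices are natural numbers; the vertices
   of C(alpha_1,...,alpha_{i-1}) are 0 .. m-1 with m = alpha_1+...+alpha_{i-1},
   and the new clique K_{alpha_i} occupies m .. m+alpha_i-1.
   C(alpha_1..alpha_i) = complement (C(alpha_1..alpha_{i-1}) disjoint-union K_{alpha_i}).
   The base case [::] is the empty graph, so that C(alpha_1) is the complement
   of K_{alpha_1}, i.e. the edgeless graph on alpha_1 vertices, as in the paper. *)
Fixpoint Cadj_rev (r : seq nat) (u v : nat) : bool :=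
  match r with
  | [::] => false
  | a :: r' =>
      let m := sumn r' in
      let in_union :=
        if (u < m)%N && (v < m)%N then Cadj_rev r' u v
        else if (m <= u)%N && (m <= v)%N then true
        else false in
      (u != v) && ~~ in_union
  end.

Definition Cadj (s : seq nat) (i j : 'I_(sumn s)) : bool :=
  Cadj_rev (rev s) i j.

Definition Cadjmx (s : seq nat) : 'M[algC]_(sumn s) :=
  \matrix_(i, j) (Cadj s i j)%:R.

Definition Cdeg (s : seq nat) (i : 'I_(sumn s)) : nat :=
  #|[set j | Cadj s i j]|.

Definition Clap (s : seq nat) : 'M[algC]_(sumn s) :=
  diag_mx (\row_i ((Cdeg s i)%:R : algC)) - Cadjmx s.

Definition three_distinct_eigenvalues (n : nat) (M : 'M[algC]_n) : Prop :=
  exists e : seq algC, [/\ uniq e, size e = 3%N & forall a, eigenvalue M a <-> a \in e].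

From mathcomp Require Import all_boot all_order all_algebra all_field.
From mathcomp Require Import zify ring.
Import GRing.Theory Num.Theory.
Local Open Scope ring_scope.

(* Part 1.  C(a1, a2) is the complete split graph K_a1 v complement(K_a2).  Its
   Laplacian L has zero column sums, and each vertex j is a twin of j-1 with
   respect to every earlier vertex k < j-1 (L k (j-1) = L k j).  For ANY matrix
   with these two properties, conjugating by the difference matrix Q (columns
   e_(j-1) - e_j) and its inverse P yields a lower triangular matrix with
   diagonal 0, L (j-1) (j-1) - L (j-1) j; this gives the characteristic
   polynomial (X - n)^a1 (X - a1)^(a2-1) X, hence the spectrum {n, a1, 0}, and
   only {n, 0} when a2 = 1 (then C(a1, 1) is complete).

   Part 2.  For k >= 4, split the vertices of C(a1, ..., ak) into the blocks
   C(a1, ..., a_(k-3)), K_(a_(k-2)), K_(a_(k-1)), K_(ak).  Adjacency between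
   distinct blocks depends only on the blocks, so block-constant eigenvectors of
   the 4 x 4 quotient Laplacian are Laplacian eigenvectors; they exhibit the four
   distinct eigenvalues 0, ak, a_(k-2) + ... + a1 + ak and n. *)

Lemma sum_delta {R : pzSemiRingType} n (g : nat -> R) a :
  \sum_(k < n) (k == a :> nat)%:R * g k = (a < n)%:R * g a.
Proof.
case: (ltnP a n) => [lt_an | le_na]; last first.
  by rewrite big1 ?mul0r // => k _; rewrite ltn_eqF ?mul0r // (leq_trans (ltn_ord k) le_na).
rewrite (bigD1 (Ordinal lt_an)) //= eqxx mul1r big1 ?addr0 ?mul1r // => k.
by rewrite -val_eqE /= => /negbTE ->; rewrite mul0r.
Qed.

Section TwinTriangularization.
Variable F : fieldType.

Lemma char_poly_conj n (P Q A : 'M[F]_n) :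
  P *m Q = 1%:M -> char_poly (P *m A *m Q) = char_poly A.
Proof.
move=> PQ; rewrite /char_poly /char_poly_mx !map_mxM.
have QP : Q *m P = 1%:M := mulmx1C PQ.
have mapPQ : map_mx polyC P *m map_mx polyC Q = 1%:M :> 'M[{poly F}]_n.
  by rewrite -map_mxM PQ map_scalar_mx.
have mapQP : map_mx polyC Q *m map_mx polyC P = 1%:M :> 'M[{poly F}]_n.
  by rewrite -map_mxM QP map_scalar_mx.
have conjX : ('X%:M : 'M[{poly F}]_n) = map_mx polyC P *m 'X%:M *m map_mx polyC Q.
  by rewrite mul_mx_scalar -scalemxAl mapPQ scalemx1.
by rewrite [X in X - _]conjX -mulmxBl -mulmxBr !det_mulmx mulrC mulrA -det_mulmx mapQP det1 mul1r.
Qed.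

Variable n : nat.

Definition diffmx : 'M[F]_n := \matrix_(a, b)
  (if b == 0 :> nat then (a == 0 :> nat)%:R else (a == b.-1 :> nat)%:R - (a == b :> nat)%:R).

Definition tailsummx : 'M[F]_n := \matrix_(a, b)
  (if a == 0 :> nat then 1 else if (a <= b)%N then -1 else 0).

Lemma mul_diffmx (f : nat -> nat -> F) (i j : 'I_n) :
  ((\matrix_(a < n, b < n) f a b) *m diffmx) i j =
  if j == 0 :> nat then f i 0%N else f i j.-1 - f i j.
Proof.
have lt_j1n : (j.-1 < n)%N by apply: leq_ltn_trans (leq_pred j) (ltn_ord j).
rewrite /diffmx mxE.
under eq_bigr => k _ do rewrite !mxE.
under eq_bigr => k _ do rewrite mulrC.
case: (nat_of_ord j =P 0%N) => [j0 | _].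
  by rewrite sum_delta (leq_ltn_trans _ (ltn_ord j)) ?mul1r.
under eq_bigr => k _ do rewrite mulrBl.
by rewrite sumrB !sum_delta lt_j1n ltn_ord !mul1r.
Qed.

Lemma tailsum_diffmx : tailsummx *m diffmx = 1%:M.
Proof.
apply/matrixP => i j.
rewrite (mul_diffmx (fun a b => if a == 0%N then 1 else if (a <= b)%N then -1 else 0)).
rewrite !mxE -val_eqE; case: i j => [[|i] _] [[|j] _] //=; rewrite ?subrr //.
by rewrite ltnS eqSS; case: ltngtP; rewrite ?subrr ?opprK ?add0r ?subr0.
Qed.

Variable l : nat -> nat -> F.
Hypothesis colsum0 : forall j, (j < n)%N -> \sum_(k < n) l k j = 0.
Hypothesis twins : forall k j, (0 < j < n)%N -> (k < j.-1)%N -> l k j.-1 = l k j.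

Let L := \matrix_(i < n, j < n) l i j.

Lemma colsum_mul_diffmx (j : 'I_n) : \sum_(k < n) (L *m diffmx) k j = 0.
Proof.
under eq_bigr => k _ do rewrite mul_diffmx.
case: (nat_of_ord j =P 0%N) => [j0 | _]; first by rewrite -j0 colsum0.
by rewrite sumrB !colsum0 ?subrr // (leq_ltn_trans (leq_pred j)).
Qed.

(* Since the columns of L Q sum to zero, row i > 0 of P (L Q), which is minus the
   sum of the rows i..n-1, equals the sum of the rows 0..i-1. *)
Lemma conj_entry (i j : 'I_n) : (tailsummx *m L *m diffmx) i j =
  if i == 0 :> nat then 0 else \sum_(k < n) (k < i)%:R * (L *m diffmx) k j.
Proof.
rewrite -mulmxA mxE; under eq_bigr => k _ do rewrite mxE.
case: (nat_of_ord i =P 0%N) => [_ | _].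
  by under eq_bigr => k _ do rewrite mul1r; rewrite colsum_mul_diffmx.
rewrite -[LHS]addr0 -[X in _ + X](colsum_mul_diffmx j) -big_split /=.
by apply: eq_bigr => k _; case: leqP; rewrite ?mulN1r ?addNr ?mul0r ?mul1r ?add0r.
Qed.

Lemma mul_diffmx_twin (k j : 'I_n) : (k < j.-1)%N -> (L *m diffmx) k j = 0.
Proof.
move=> lt_kj; rewrite mul_diffmx ifF ?twins ?subrr //; last by apply/eqP; lia.
by rewrite ltn_ord andbT; lia.
Qed.

Lemma conj_trig : is_trig_mx (tailsummx *m L *m diffmx).
Proof.
apply/is_trig_mxP => i j lt_ij; rewrite conj_entry; case: eqP => // _.
rewrite big1 // => k _; case: (ltnP k i) => [lt_ki | _]; last by rewrite mul0r.
by rewrite mul_diffmx_twin ?mulr0 //; lia.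
Qed.

Lemma conj_diag (i : 'I_n) : (tailsummx *m L *m diffmx) i i =
  if i == 0 :> nat then 0 else l i.-1 i.-1 - l i.-1 i.
Proof.
rewrite conj_entry; case: (nat_of_ord i =P 0%N) => // i0.
have lt_i1n : (i.-1 < n)%N by apply: leq_ltn_trans (leq_pred i) (ltn_ord i).
rewrite (bigD1 (Ordinal lt_i1n)) //= mul_diffmx ifF; last by apply/eqP.
rewrite (_ : (i.-1 < i)%N) ?mul1r ?big1 ?addr0 // => [k ne_ki|]; last by lia.
case: (ltnP k i) => [lt_ki | _]; last by rewrite mul0r.
rewrite mul_diffmx_twin ?mulr0 //.
by move: ne_ki; rewrite -val_eqE /=; lia.
Qed.

Theorem char_poly_twin : char_poly L =
  \prod_(i < n) ('X - (if i == 0 :> nat then 0 else l i.-1 i.-1 - l i.-1 i)%:P).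
Proof.
rewrite -(@char_poly_conj n _ _ L tailsum_diffmx) (char_poly_trig conj_trig).
by apply: eq_bigr => i _; rewrite conj_diag.
Qed.
End TwinTriangularization.

Definition adj (s : seq nat) (u v : nat) : bool := Cadj_rev (rev s) u v.
Definition deg (s : seq nat) (u : nat) : nat := \sum_(j < sumn s) adj s u j.
Definition lapl (s : seq nat) (a b : nat) : algC :=
  (a == b)%:R * (deg s a)%:R - (adj s a b)%:R.

Lemma adj_sym s u v : adj s u v = adj s v u.
Proof.
rewrite /adj; elim: (rev s) u v => //= a r IH u v.
by rewrite eq_sym IH [(v < _)%N && _]andbC [(_ <= v)%N && _]andbC.
Qed.

Lemma Clap_lapl s : Clap s = \matrix_(i, j) lapl s i j.
Proof.
apply/matrixP => i j; rewrite !mxE /lapl /Cadj -/(adj s i j).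
have -> : Cdeg s i = deg s i.
  rewrite /Cdeg -sum1_card big_mkcond /=; apply: eq_bigr => k _.
  by rewrite inE /Cadj -/(adj s i k); case: adj.
case: (eqVneq i j) => [-> | ne_ij]; first by rewrite eqxx mulr1n mul1r.
by rewrite -val_eqE /= in ne_ij; rewrite (negbTE ne_ij) mulr0n mul0r.
Qed.

(* Every column of a Laplacian sums to zero, since the graph is undirected. *)
Lemma colsum_lapl s j : (j < sumn s)%N -> \sum_(k < sumn s) lapl s k j = 0.
Proof.
move=> lt_j; rewrite /lapl sumrB (sum_delta _ (fun k => (deg s k)%:R)) lt_j mul1r -natr_sum.
by apply/eqP; rewrite subr_eq0 eqr_nat; apply/eqP/eq_bigr => k _; rewrite adj_sym.
Qed.

Lemma count_interval n a b :
  (\sum_(i < n) ((a <= i) && (i < b)) = minn b n - a)%N.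
Proof.
elim: n => [|n IH]; first by rewrite big_ord0; lia.
by rewrite big_ord_recr /= IH; case: (leqP a n); case: (ltnP n b); lia.
Qed.

Lemma sum_interval {R : pzSemiRingType} n a b (c : R) : (b <= n)%N ->
  \sum_(i < n) ((a <= i) && (i < b))%N%:R * c = (b - a)%N%:R * c.
Proof.
by move=> le_bn; rewrite -big_distrl -natr_sum count_interval; congr (_%:R * _); lia.
Qed.

Lemma adj_split a1 a2 u v : adj [:: a1; a2] u v = (u != v) && ((u < a1)%N || (v < a1)%N).
Proof.
rewrite /adj /= addn0; case: (u =P v) => //= _.
by case: (ltnP u a1) => ?; case: (ltnP v a1) => ? //=; rewrite ?andbF.
Qed.

Lemma deg_split a1 a2 u : (u < a1 + a2)%N ->
  deg [:: a1; a2] u = if (u < a1)%N then (a1 + a2).-1 else a1.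
Proof.
move=> lt_un; rewrite /deg /= addn0; under eq_bigr => j _ do rewrite adj_split.
case: (ltnP u a1) => [_ | le_a1u].
  rewrite -[in RHS](card_ord (a1 + a2)) -(cardC1 (Ordinal lt_un)) -sum1_card big_mkcond.
  rewrite [RHS]big_mkcond; apply: eq_bigr => j _.
  by rewrite orTb andbT inE -val_eqE /= eq_sym; case: eqP.
rewrite -[RHS]subn0 -[in RHS](minn_idPl (leq_trans le_a1u (ltnW lt_un))).
rewrite -count_interval; apply: eq_bigr => j _; case: (ltnP j a1) => lt_j.
  by rewrite neq_ltn (leq_trans lt_j le_a1u) orbT.
by rewrite /= !andbF.
Qed.

Lemma lapl_split_step a1 a2 i : (0 < i < a1 + a2)%N ->
  lapl [:: a1; a2] i.-1 i.-1 - lapl [:: a1; a2] i.-1 i =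
  (if (i.-1 < a1)%N then a1 + a2 else a1)%N%:R.
Proof.
move=> /andP [i_gt0 lt_in]; have ne_i : (i.-1 == i) = false by apply/negbTE; lia.
rewrite /lapl !adj_split eqxx ne_i /=.
rewrite mul0r mul1r sub0r opprK subr0 -natrD deg_split; last by lia.
case: (ltnP i.-1 a1) => [_ | ?] /=; first by congr _%:R; lia.
by rewrite (_ : (i < a1)%N = false) ?addn0 //; apply/negbTE; lia.
Qed.

Lemma lapl_split_twins a1 a2 k j : (0 < j < a1 + a2)%N -> (k < j.-1)%N ->
  lapl [:: a1; a2] k j.-1 = lapl [:: a1; a2] k j.
Proof.
move=> /andP [j_gt0 _] lt_kj.
have [ne_k1 ne_k] : (k == j.-1) = false /\ (k == j) = false by split; apply/negbTE; lia.
rewrite /lapl !adj_split ne_k1 ne_k /=; case: (ltnP k a1) => // le_a1k.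
by rewrite (_ : (j.-1 < a1)%N = false) 1?(_ : (j < a1)%N = false) //; apply/negbTE; lia.
Qed.

Theorem char_poly_split a1 a2 : (0 < a1)%N -> (0 < a2)%N ->
  char_poly (Clap [:: a1; a2])
   = ('X - ((a1 + a2)%N)%:R%:P) ^+ a1 * ('X - a1%:R%:P) ^+ (a2.-1) * 'X.
Proof.
move=> a1_gt0 a2_gt0; rewrite Clap_lapl (@char_poly_twin _ _ _ (@colsum_lapl [:: a1; a2])); last first.
  by move=> k j; rewrite /= addn0; apply: lapl_split_twins.
rewrite -(big_mkord xpredT (fun i => 'X - (if i == 0%N then 0 else
  lapl [:: a1; a2] i.-1 i.-1 - lapl [:: a1; a2] i.-1 i)%:P)).
have -> : sumn [:: a1; a2] = (a1 + a2)%N by rewrite /= addn0.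
rewrite big_ltn; last lia.
rewrite (@big_cat_nat _ _ _ a1.+1) //; last lia.
rewrite eqxx subr0 mulrC.
rewrite (eq_big_nat _ _ (F2 := fun _ => 'X - ((a1 + a2)%N)%:R%:P)); last first.
  by move=> i /andP [? ?]; rewrite ifF ?lapl_split_step ?ifT //; lia.
rewrite [X in _ * X * _ = _](eq_big_nat _ _ (F2 := fun _ => 'X - a1%:R%:P)); last first.
  by move=> i /andP [? ?]; rewrite ifF ?lapl_split_step ?ifF //; lia.
rewrite !prodr_const_nat subSS subn0; congr (_ * _ ^+ _ * _); lia.
Qed.

Lemma root_XsubC_exp {R : idomainType} (a x : R) k :
  root (('X - a%:P) ^+ k) x = (0 < k)%N && (x == a).
Proof.
by case: k => [|k]; rewrite ?expr0 ?(negbTE (root1 _)) // root_exp_XsubC.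
Qed.

Lemma eigenvalue_split a1 a2 x : (0 < a1)%N -> (0 < a2)%N ->
  eigenvalue (Clap [:: a1; a2]) x =
  [|| x == (a1 + a2)%N%:R, (1 < a2)%N && (x == a1%:R) | x == 0].
Proof.
move=> a1_gt0 a2_gt0; rewrite eigenvalue_root_char char_poly_split //.
by rewrite !rootM !root_XsubC_exp rootX a1_gt0 -orbA (_ : (0 < a2.-1)%N = (1 < a2)%N) //; lia.
Qed.

Lemma split_three_eigenvalues a1 a2 : (0 < a1)%N -> (2 <= a2)%N ->
  @three_distinct_eigenvalues _ (Clap [:: a1; a2]).
Proof.
move=> a1_gt0 a2_ge2; exists [:: (a1 + a2)%N%:R; a1%:R; 0]; split => //.
  rewrite /= !inE !negb_or eqr_nat !pnatr_eq0 andbT.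
  by apply/andP; split; [apply/andP; split|]; lia.
by move=> x; rewrite eigenvalue_split // ?a2_ge2 /= ?inE //; lia.
Qed.

(* C(a1, 1) is the complete graph K_(a1+1), whose spectrum is {a1 + 1, 0}. *)
Lemma complete_not_three a1 : (0 < a1)%N ->
  ~ @three_distinct_eigenvalues _ (Clap [:: a1; 1%N]).
Proof.
move=> a1_gt0 [e [uniq_e size_e eig_e]].
have : (size e <= 2)%N.
  apply: (@uniq_leq_size _ _ [:: (a1 + 1)%N%:R; 0]) => // x /eig_e.
  by rewrite eigenvalue_split //= !inE.
by rewrite size_e.
Qed.

Lemma lapl_eigenvector s (f : nat -> algC) (lam : algC) :
  (exists2 i, (i < sumn s)%N & f i != 0) ->
  (forall j, (j < sumn s)%N ->
     \sum_(i < sumn s) (adj s j i)%:R * (f j - f i) = lam * f j) ->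
  eigenvalue (Clap s) lam.
Proof.
move=> [i0 lt_i0 fi0_neq0] eig_f; apply/eigenvalueP; exists (\row_i f i); last first.
  apply: contraNneq fi0_neq0 => /rowP /(_ (Ordinal lt_i0)).
  by rewrite !mxE => ->.
apply/rowP => j; rewrite Clap_lapl !mxE -eig_f //.
under eq_bigr => i _ do rewrite !mxE /lapl mulrBr.
under [RHS]eq_bigr => i _ do rewrite mulrBr.
rewrite !sumrB; congr (_ - _).
  under eq_bigr => i _ do rewrite mulrCA.
  rewrite (sum_delta _ (fun k => f k * (deg s k)%:R)) ltn_ord mul1r.
  by rewrite -big_distrl -natr_sum mulrC.
by apply: eq_bigr => i _; rewrite adj_sym mulrC.
Qed.

(* For k >= 4 write the reversed parameter list as [:: x, y, z & r], so that
   C(s) = complement (complement (complement (C(r) + K_z) + K_y) + K_x).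
   Its vertices fall into four blocks: 0 = C(r), 1 = K_z, 2 = K_y, 3 = K_x, and
   the adjacency of two vertices in distinct blocks depends only on the blocks. *)
Section FourBlocks.
Variables (x y z : nat) (r s : seq nat).
Hypothesis rev_s : rev s = [:: x, y, z & r].

Lemma adj_nested u v : u != v -> adj s u v =
  if (u < y + (z + sumn r))%N && (v < y + (z + sumn r))%N then
     (if (u < z + sumn r)%N && (v < z + sumn r)%N then
        ~~ (if (u < sumn r)%N && (v < sumn r)%N then Cadj_rev r u v
            else (sumn r <= u)%N && (sumn r <= v)%N)
      else (z + sumn r <= u)%N && (z + sumn r <= v)%N)
  else ~~ ((y + (z + sumn r) <= u)%N && (y + (z + sumn r) <= v)%N).
Proof.
move=> ne_uv; rewrite /adj rev_s /= ne_uv /=.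
by repeat case: ifP => //=; rewrite ?negbK.
Qed.

Lemma sumn_blocks : sumn s = (x + (y + (z + sumn r)))%N.
Proof. by rewrite -sumn_rev rev_s. Qed.

Definition block (i : nat) : nat :=
  if (i < sumn r)%N then 0 else if (i < z + sumn r)%N then 1
  else if (i < y + (z + sumn r))%N then 2 else 3.

Definition block_adj (p q : nat) : bool :=
  (p != q) && ~~ (((p < 2)%N && (q == 2)) || ((p == 2) && (q < 2)%N)).

Ltac case_block t := case: (ltnP t (sumn r)) => ?; case: (ltnP t (z + sumn r)) => ?;
  case: (ltnP t (y + (z + sumn r))) => ?.

Lemma adj_block i j : block i != block j -> adj s j i = block_adj (block j) (block i).
Proof.
move=> ne_blocks; have ne_ji : j != i by apply: contraNneq ne_blocks => ->.
rewrite adj_nested // /block_adj; move: ne_blocks; rewrite /block.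
by case_block i; case_block j; try (exfalso; lia).
Qed.

Definition block_lapl (F : nat -> algC) (p : nat) : algC :=
    (sumn r)%:R * ((block_adj p 0)%:R * (F p - F 0))
  + z%:R * ((block_adj p 1)%:R * (F p - F 1))
  + y%:R * ((block_adj p 2)%:R * (F p - F 2))
  + x%:R * ((block_adj p 3)%:R * (F p - F 3)).

Lemma lapl_block_constant (F : nat -> algC) j : (j < sumn s)%N ->
  \sum_(i < sumn s) (adj s j i)%:R * (F (block j) - F (block i)) =
  block_lapl F (block j).
Proof.
move=> lt_js; set G := fun q => (block_adj (block j) q)%:R * (F (block j) - F q).
have termE i : (adj s j i)%:R * (F (block j) - F (block i)) = G (block i).
  case: (eqVneq (block i) (block j)) => [-> | ne]; first by rewrite /G !subrr !mulr0.
  by rewrite adj_block.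
under eq_bigr => i _ do rewrite termE.
rewrite (eq_bigr (fun i : 'I_(sumn s) =>
     ((0 <= i) && (i < sumn r))%N%:R * G 0
   + ((sumn r <= i) && (i < z + sumn r))%N%:R * G 1
   + ((z + sumn r <= i) && (i < y + (z + sumn r)))%N%:R * G 2
   + ((y + (z + sumn r) <= i) && (i < sumn s))%N%:R * G 3)); last first.
  move=> i _; rewrite ltn_ord /block.
  have := ltn_ord i; rewrite {2}sumn_blocks => lt_is.
  by case_block (nat_of_ord i); try (exfalso; lia); rewrite /= ?mul1r ?mul0r ?addr0 ?add0r.
rewrite !big_split !sum_interval ?sumn_blocks; try lia.
by rewrite /block_lapl subn0 !addnK.
Qed.

Hypothesis (x_gt0 : (0 < x)%N) (y_gt0 : (0 < y)%N) (z_gt0 : (0 < z)%N)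
  (r_gt0 : (0 < sumn r)%N).

Lemma block_eigenvalue (F : nat -> algC) lam : F 0 != 0 ->
  (forall p, (p < 4)%N -> block_lapl F p = lam * F p) ->
  eigenvalue (Clap s) lam.
Proof.
move=> F0_neq0 eig_F; apply: (@lapl_eigenvector s (fun i => F (block i))).
  by exists 0%N; rewrite ?sumn_blocks ?/block ?r_gt0 //; lia.
move=> j lt_js; rewrite lapl_block_constant // eig_F //.
by rewrite /block; repeat case: ifP.
Qed.

(* The four eigenvectors of the quotient Laplacian, given by their block values:
   constant vectors, and vectors orthogonal to all ones on blocks 0..3, 0..2, 0..1. *)
Lemma eigenvalue_0 : eigenvalue (Clap s) 0.
Proof.
apply: (@block_eigenvalue (fun _ => 1)); first exact: oner_neq0.
by move=> p _; rewrite /block_lapl !subrr !mulr0 mul0r !addr0.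
Qed.

Lemma eigenvalue_x : eigenvalue (Clap s) x%:R.
Proof.
apply: (@block_eigenvalue (nth 0 [:: y%:R; y%:R; - (z + sumn r)%N%:R; 0])).
  by rewrite /= pnatr_eq0 -lt0n.
by move=> [|[|[|[|p]]]] //= _; rewrite /block_lapl /block_adj /= !natrD; ring.
Qed.

Lemma eigenvalue_zrx : eigenvalue (Clap s) (z + sumn r + x)%N%:R.
Proof.
apply: (@block_eigenvalue (nth 0 [:: z%:R; - (sumn r)%:R; 0; 0])).
  by rewrite /= pnatr_eq0 -lt0n.
by move=> [|[|[|[|p]]]] //= _; rewrite /block_lapl /block_adj /= !natrD; ring.
Qed.

Lemma eigenvalue_order : eigenvalue (Clap s) (x + (y + (z + sumn r)))%N%:R.
Proof.
apply: (@block_eigenvalue (nth 0 [:: x%:R; x%:R; x%:R; - (y + (z + sumn r))%N%:R])).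
  by rewrite /= pnatr_eq0 -lt0n.
by move=> [|[|[|[|p]]]] //= _; rewrite /block_lapl /block_adj /= !natrD; ring.
Qed.

(* The four eigenvalues 0 < x < z + |C(r)| + x < |C(s)| are distinct. *)
Lemma four_blocks_not_three : ~ @three_distinct_eigenvalues _ (Clap s).
Proof.
move=> [e [uniq_e size_e eig_e]].
have : (4 <= size e)%N.
  apply: (@uniq_leq_size _ [:: 0; x%:R; (z + sumn r + x)%N%:R;
                                 (x + (y + (z + sumn r)))%N%:R]) => [|t].
    rewrite /= !inE !negb_or !eqr_nat !(eq_sym 0) !pnatr_eq0 andbT.
    by apply/and3P; split; [apply/and3P; split | apply/andP; split |]; lia.
  rewrite !inE => /or4P [] /eqP ->; apply/eig_e.
  - exact: eigenvalue_0.
  - exact: eigenvalue_x.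
  - exact: eigenvalue_zrx.
  - exact: eigenvalue_order.
by rewrite size_e.
Qed.
End FourBlocks.

Lemma two_params_three_iff a1 a2 : (0 < a1)%N -> (0 < a2)%N ->
  @three_distinct_eigenvalues _ (Clap [:: a1; a2]) <-> (2 <= a2)%N.
Proof.
move=> a1_gt0 a2_gt0; split; last exact: split_three_eigenvalues.
case: (ltnP 1 a2) => // a2_le1 three; have a2_1 : a2 = 1%N by lia.
by move: three; rewrite a2_1 => /(complete_not_three _ a1_gt0).
Qed.

Lemma long_not_three s : all (fun a => 0 < a)%N s -> (4 <= size s)%N ->
  ~ @three_distinct_eigenvalues _ (Clap s).
Proof.
rewrite -all_rev -size_rev; case rev_s: (rev s) => [|x [|y [|z r]]] //=.
move=> /and4P [x_gt0 y_gt0 z_gt0 pos_r] size_r.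
have r_gt0 : (0 < sumn r)%N.
  by move: pos_r size_r; case: (r) => //= a r' /andP [a_gt0 _] _; lia.
exact: (four_blocks_not_three _ _ _ _ _ rev_s x_gt0 y_gt0 z_gt0 r_gt0).
Qed.

Theorem mainTheorem9 :
  (forall a1 a2 : nat, (0 < a1)%N -> (2 <= a2)%N ->
     char_poly (Clap [:: a1; a2])
       = ('X - ((a1 + a2)%N)%:R%:P) ^+ a1 * ('X - a1%:R%:P) ^+ (a2.-1) * 'X
     /\ @three_distinct_eigenvalues _ (Clap [:: a1; a2]))
  /\
  (forall s : seq nat, all (fun a => 0 < a)%N s -> ~~ odd (size s) -> (0 < size s)%N ->
     (@three_distinct_eigenvalues _ (Clap s) <-> size s = 2%N /\ (2 <= nth 0%N s 1)%N)).
Proof.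
split=> [a1 a2 a1_gt0 a2_ge2 | s pos_s even_s s_gt0].
  have a2_gt0 : (0 < a2)%N by apply: ltnW.
  by split; [apply: char_poly_split | apply: split_three_eigenvalues].
case: (eqVneq (size s) 2) => [size2 | size_ne2].
  move: pos_s size2; case: (s) => [|a1 [|a2 [|? ?]]] //= /and3P [a1_gt0 a2_gt0 _] _.
  by rewrite two_params_three_iff //; split=> [|[]].
have size_ge4 : (4 <= size s)%N.
  by move: even_s s_gt0 size_ne2; case: (size s) => [|[|[|[|k]]]].
by split=> [/(long_not_three _ pos_s size_ge4) [] | [/eqP]]; rewrite ?(negbTE size_ne2).
Qed.
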